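(* Let $\mathbf{A}$ be a countable UL-chain and let $\mathscr{K}_0$ be the class of all finite $\mathbf{A}$-structures $\langle\mathbf{A},\mathbf{M}\rangle$ in the language with a single binary relation symbol $<$ (and no other symbols) such that for all $a,b,c\in M$: (0.1) $\|a<a\|^{\mathbf{A}}_{\mathbf{M}}\ge \bar 1$, and (0.2) $\|(a<b\wedge b<c)\to a<c\|^{\mathbf{A}}_{\mathbf{M}}\ge\bar 1$. Then $\mathscr{K}_0^{\cong}$ is the age of some $\mathbf{A}$-structure.
   Context: A UL-algebra is $\mathbf{A}=\langle A,\wedge,\vee,\&,\to,\bar 0,\bar 1,\bot,\top\rangle$ where $\langle A,\wedge,\vee,\bot,\top\rangle$ is a bounded lattice, $\langle A,\&,\bar 1\rangle$ is a commutative monoid, $a\& b\le c$ iff $b\le a\to c$, and $((a\to b)\wedge\bar 1)\vee((b\to a)\wedge \bar 1)=\bar 1$; a UL-chain is one with linear order. An $\mathbf{A}$-structure for the language $\{<\}$ is a set $M$ with a function $<_{\mathbf{M}}:M^2\to A$; $\|a<b\|^{\mathbf{A}}_{\mathbf{M}}=<_{\mathbf{M}}(a,b)$ and compound quantifier-free formulas are evaluated by the operations of $\mathbf{A}$. A substructure is a subset with the restricted relation; an embedding is an injective map preserving the value of $<$ (hence of all quantifier-free formulas), with the identity on $\mathbf{A}$; an isomorphism is a surjective embedding. $\mathscr{K}^{\cong}$ denotes a class containing exactly one representative of each isomorphism type of members of $\mathscr{K}$. The age of an $\mathbf{A}$-structure is the class, up to isomorphism, of its finitely generated (here: finite) substructures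 and their isomorphic copies. *)

From Stdlib Require Import List.

Record ULAlgebra := {
  car :> Type;
  meet : car -> car -> car;
  join : car -> car -> car;
  fus  : car -> car -> car;
  imp  : car -> car -> car;
  zero_bar : car;
  one_bar  : car;
  bot : car;
  top : car;
  meetA : forall a b c, meet a (meet b c) = meet (meet a b) c;
  joinA : forall a b c, join a (join b c) = join (join a b) c;
  meetC : forall a b, meet a b = meet b a;
  joinC : forall a b, join a b = join b a;
  meet_absorb : forall a b, meet a (join a b) = a;
  join_absorb : forall a b, join a (meet a b) = a;
  join_bot : forall a, join bot a = a;
  meet_top : forall a, meet top a = a;
  fusA : forall a b c, fus a (fus b c) = fus (fus a b) c;
  fusC : forall a b, fus a b = fus b a;
  fus1 : forall a, fus one_bar a = a;
  (* residuation: a & b <= c iff b <= a -> c  (x <= y := x /\ y = x) *)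
  residuation : forall a b c, meet (fus a b) c = fus a b <-> meet b (imp a c) = b;
  prelinearity : forall a b,
    join (meet (imp a b) one_bar) (meet (imp b a) one_bar) = one_bar
}.

Definition ul_le (A : ULAlgebra) (x y : A) : Prop := meet A x y = x.

Definition is_chain (A : ULAlgebra) : Prop :=
  forall x y : A, ul_le A x y \/ ul_le A y x.

Definition countable_type (T : Type) : Prop :=
  exists f : T -> nat, forall x y, f x = f y -> x = y.

Definition finite_type (T : Type) : Prop :=
  exists l : list T, forall x, In x l.

Record AStructure (A : ULAlgebra) := {
  dom :> Type;
  lt_val : dom -> dom -> A
}.
Arguments lt_val {A} a _ _.

Definition in_K0 (A : ULAlgebra) (M : AStructure A) : Prop :=
  finite_type M /\
  (forall a : M, ul_le A (one_bar A) (lt_val M a a)) /\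
  (forall a b c : M,
     ul_le A (one_bar A)
       (imp A (meet A (lt_val M a b) (lt_val M b c)) (lt_val M a c))).

Definition substructure (A : ULAlgebra) (N : AStructure A) (S : N -> Prop)
  : AStructure A :=
  {| dom := { x : N | S x };
     lt_val := fun x y => lt_val N (proj1_sig x) (proj1_sig y) |}.

Definition isomorphic (A : ULAlgebra) (M M' : AStructure A) : Prop :=
  exists f : M -> M',
    (forall x y, f x = f y -> x = y) /\
    (forall y, exists x, f x = y) /\
    (forall x y, lt_val M' (f x) (f y) = lt_val M x y).

Definition in_age (A : ULAlgebra) (N : AStructure A) (M : AStructure A) : Prop :=
  exists S : N -> Prop,
    (exists l : list N, forall x, S x -> In x l) /\
    isomorphic A M (substructure A N S).

(** Let [N] be the disjoint union of all members of [K_0] whose carrier is an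
    initial segment of [nat], with [a < b] valued [bot] whenever [a] and [b]
    lie in different summands.  Every member of [K_0] is isomorphic to one
    summand.  Conversely [N] satisfies (0.1) and (0.2): across summands the
    antecedent of (0.2) is [bot], and [bot -> c >= 1] by residuation; so every
    finite substructure of [N] lies in [K_0]. *)

From Stdlib Require Import List Arith Classical ClassicalEpsilon ProofIrrelevance.

Section Structures.
Context {A : ULAlgebra}.

Lemma meet_bot_l (c : A) : meet A (bot A) c = bot A.
Proof. rewrite <- (join_bot A c) at 1. apply meet_absorb. Qed.

Lemma one_le_imp_bot (c : A) : ul_le A (one_bar A) (imp A (bot A) c).
Proof.
  apply (proj1 (residuation A (bot A) (one_bar A) c)).
  rewrite fusC, fus1. apply meet_bot_l.
Qed.

Definition fuzzy_preorder (M : AStructure A) : Prop :=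
  (forall a : M, ul_le A (one_bar A) (lt_val M a a)) /\
  (forall a b c : M,
     ul_le A (one_bar A)
       (imp A (meet A (lt_val M a b) (lt_val M b c)) (lt_val M a c))).

Lemma finite_type_surj {T U : Type} (f : T -> U) :
  (forall y, exists x, f x = y) -> finite_type T -> finite_type U.
Proof.
  intros f_surj [l Hl]. exists (map f l). intros y.
  destruct (f_surj y) as [x <-]. apply in_map, Hl.
Qed.

Lemma finite_type_NoDup {T : Type} :
  finite_type T -> exists l : list T, NoDup l /\ forall x, In x l.
Proof.
  intros [l Hl].
  set (eq_dec := fun x y : T => excluded_middle_informative (x = y)).
  exists (nodup eq_dec l). split.
  - apply NoDup_nodup.
  - intros x. apply nodup_In, Hl.
Qed.

Lemma finite_sig {T : Type} {S : T -> Prop} {l : list T} :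
  (forall x, S x -> In x l) -> finite_type {x | S x}.
Proof.
  intros Hl.
  assert (Hcover : exists l' : list {x | S x},
            forall x (Sx : S x), In x l -> In (exist S x Sx) l').
  { clear Hl. induction l as [|a l [l' Hl']].
    - exists nil. intros x _ [].
    - destruct (classic (S a)) as [Sa|nSa].
      + exists (exist S a Sa :: l'). intros x Sx [<-|Hx].
        * left. f_equal. apply proof_irrelevance.
        * right. apply Hl', Hx.
      + exists l'. intros x Sx [<-|Hx]; [contradiction | apply Hl', Hx]. }
  destruct Hcover as [l' Hl']. exists l'.
  intros [x Sx]. apply Hl', Hl, Sx.
Qed.

Section Transfer.
Variables M M' : AStructure A.
Variable f : M -> M'.
Hypothesis f_lt : forall x y, lt_val M' (f x) (f y) = lt_val M x y.

Lemma fuzzy_preorder_pullback : fuzzy_preorder M' -> fuzzy_preorder M.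
Proof.
  intros [Hrefl Htrans]. split.
  - intros a. rewrite <- f_lt. apply Hrefl.
  - intros a b c. rewrite <- !f_lt. apply Htrans.
Qed.

Hypothesis f_surj : forall y, exists x, f x = y.

Lemma fuzzy_preorder_pushforward : fuzzy_preorder M -> fuzzy_preorder M'.
Proof.
  intros [Hrefl Htrans]. split.
  - intros a'. destruct (f_surj a') as [a <-]. rewrite f_lt. apply Hrefl.
  - intros a' b' c'.
    destruct (f_surj a') as [a <-], (f_surj b') as [b <-], (f_surj c') as [c <-].
    rewrite !f_lt. apply Htrans.
Qed.

End Transfer.

Arguments fuzzy_preorder_pullback {M M'} f.
Arguments fuzzy_preorder_pushforward {M M' f}.

Lemma in_K0_isomorphic {M M' : AStructure A} :
  isomorphic A M M' -> in_K0 A M -> in_K0 A M'.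
Proof.
  intros (f & _ & f_surj & f_lt) [Hfin Hpre]. split.
  - exact (finite_type_surj f f_surj Hfin).
  - exact (fuzzy_preorder_pushforward f_lt f_surj Hpre).
Qed.

Lemma isomorphic_sym {M M' : AStructure A} :
  isomorphic A M M' -> isomorphic A M' M.
Proof.
  intros (f & f_inj & f_surj & f_lt).
  set (g := fun y => proj1_sig (constructive_indefinite_description _ (f_surj y))).
  assert (fK : forall y, f (g y) = y).
  { intros y. exact (proj2_sig (constructive_indefinite_description _ (f_surj y))). }
  exists g. split; [|split].
  - intros y y' E. rewrite <- (fK y), <- (fK y'), E. reflexivity.
  - intros x. exists (f x). apply f_inj, fK.
  - intros y y'. rewrite <- f_lt, !fK. reflexivity.
Qed.

Lemma isomorphic_trans {M1 M2 M3 : AStructure A} :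
  isomorphic A M1 M2 -> isomorphic A M2 M3 -> isomorphic A M1 M3.
Proof.
  intros (f & f_inj & f_surj & f_lt) (g & g_inj & g_surj & g_lt).
  exists (fun x => g (f x)). split; [|split].
  - intros x y E. apply f_inj, g_inj, E.
  - intros z. destruct (g_surj z) as [y <-], (f_surj y) as [x <-]. exists x. reflexivity.
  - intros x y. rewrite g_lt. apply f_lt.
Qed.

Lemma substructure_in_K0 {N : AStructure A} {S : N -> Prop} (l : list N) :
  fuzzy_preorder N -> (forall x, S x -> In x l) -> in_K0 A (substructure A N S).
Proof.
  intros HN Hl. split.
  - exact (finite_sig Hl).
  - apply (fuzzy_preorder_pullback (M := substructure A N S) (M' := N) (@proj1_sig _ S)).
    + reflexivity.
    + exact HN.
Qed.

Definition segment_structure (n : nat) (r : nat -> nat -> A) : AStructure A :=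
  {| dom := {k | k < n}; lt_val := fun i j => r (proj1_sig i) (proj1_sig j) |}.

Lemma segment_eq (n : nat) (i j : {k | k < n}) : proj1_sig i = proj1_sig j -> i = j.
Proof. apply eq_sig_hprop. intros k. apply le_unique. Qed.

Lemma finite_isomorphic_segment {M : AStructure A} :
  finite_type M -> exists n r, isomorphic A M (segment_structure n r).
Proof.
  intros Hfin. destruct (finite_type_NoDup Hfin) as (l & Hnd & Hl).
  set (r := fun i j => match nth_error l i, nth_error l j with
                       | Some a, Some b => lt_val M a b
                       | _, _ => bot A
                       end).
  set (pos := fun a => constructive_indefinite_description _ (In_nth_error l a (Hl a))).
  assert (pos_lt : forall a, proj1_sig (pos a) < length l).
  { intros a. apply nth_error_Some. rewrite (proj2_sig (pos a)). discriminate. }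
  exists (length l), r, (fun a => exist _ (proj1_sig (pos a)) (pos_lt a)).
  split; [|split].
  - intros a b E. apply (f_equal (@proj1_sig _ _)) in E. simpl in E.
    destruct (pos a) as [i Ei], (pos b) as [j Ej]. simpl in E. congruence.
  - intros [k Hk].
    destruct (nth_error l k) as [a|] eqn:Ea;
      [|exfalso; exact (proj2 (nth_error_Some l k) Hk Ea)].
    exists a. apply segment_eq. simpl.
    apply (proj1 (NoDup_nth_error l) Hnd); [apply pos_lt|].
    rewrite Ea. exact (proj2_sig (pos a)).
  - intros a b. simpl. unfold r.
    rewrite (proj2_sig (pos a)), (proj2_sig (pos b)). reflexivity.
Qed.

(* Summands are indexed by codes of structures on initial segments of [nat]
   rather than by arbitrary members of [K_0]: a sum over [AStructure A] would
   not fit in the universe of [dom]. *)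
Definition code : Type :=
  {p : nat * (nat -> nat -> A) | in_K0 A (segment_structure (fst p) (snd p))}.

Definition code_structure (c : code) : AStructure A :=
  segment_structure (fst (proj1_sig c)) (snd (proj1_sig c)).

Definition union_lt (x y : {c : code & code_structure c}) : A :=
  if excluded_middle_informative (projT1 x = projT1 y)
  then snd (proj1_sig (projT1 x)) (proj1_sig (projT2 x)) (proj1_sig (projT2 y))
  else bot A.

Definition disjoint_union : AStructure A :=
  {| dom := {c : code & code_structure c}; lt_val := union_lt |}.

Lemma union_lt_summand (x y : disjoint_union) : projT1 x = projT1 y ->
  union_lt x y = snd (proj1_sig (projT1 x)) (proj1_sig (projT2 x)) (proj1_sig (projT2 y)).
Proof.
  intros E. unfold union_lt.
  destruct (excluded_middle_informative _) as [_|neq]; [reflexivity | contradiction].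
Qed.

Lemma union_lt_across (x y : disjoint_union) : projT1 x <> projT1 y -> union_lt x y = bot A.
Proof.
  intros neq. unfold union_lt.
  destruct (excluded_middle_informative _) as [E|_]; [contradiction | reflexivity].
Qed.

Lemma disjoint_union_fuzzy_preorder : fuzzy_preorder disjoint_union.
Proof.
  split; simpl.
  - intros x. rewrite union_lt_summand by reflexivity.
    apply (proj2 (proj2_sig (projT1 x))).
  - intros a b c.
    destruct (classic (projT1 a = projT1 b)) as [ab|nab];
      [|rewrite (union_lt_across _ _ nab), meet_bot_l; apply one_le_imp_bot].
    destruct (classic (projT1 b = projT1 c)) as [bc|nbc];
      [|rewrite (union_lt_across _ _ nbc), meetC, meet_bot_l; apply one_le_imp_bot].
    rewrite (union_lt_summand _ _ ab), (union_lt_summand _ _ bc),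
      (union_lt_summand _ _ (eq_trans ab bc)).
    destruct a as [ca i], b as [cb j], c as [cc k]. simpl in *. subst cb cc.
    apply (proj2 (proj2 (proj2_sig ca))).
Qed.

Lemma code_structure_isomorphic_summand (c : code) :
  isomorphic A (code_structure c)
    (substructure A disjoint_union (fun x => projT1 x = c)).
Proof.
  exists (fun k => exist (fun x : disjoint_union => projT1 x = c) (existT _ c k) eq_refl).
  split; [|split].
  - intros i j E. apply (f_equal (@proj1_sig _ _)) in E.
    exact (inj_pair2 _ _ _ _ _ E).
  - intros [[c' k] E]. simpl in E. destruct E. exists k. reflexivity.
  - intros i j. apply union_lt_summand. reflexivity.
Qed.

End Structures.

Theorem proposition1 :
  forall A : ULAlgebra, is_chain A -> countable_type A ->
  exists N : AStructure A,
    forall M : AStructure A, in_K0 A M <-> in_age A N M.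
Proof.
  intros A _ _. exists disjoint_union. intros M. split.
  - intros HM.
    destruct (finite_isomorphic_segment (proj1 HM)) as (n & r & Hseg).
    set (c := exist _ (n, r) (in_K0_isomorphic Hseg HM) : code).
    pose proof (code_structure_isomorphic_summand c) as Hsummand.
    destruct (in_K0_isomorphic Hsummand (proj2_sig c)) as [[l Hl] _].
    exists (fun x => projT1 x = c). split.
    + exists (map (@proj1_sig _ _) l). intros x Hx.
      apply (in_map (@proj1_sig _ _) l (exist _ x Hx)), Hl.
    + exact (isomorphic_trans Hseg Hsummand).
  - intros (S & [l Hl] & Hiso).
    apply (in_K0_isomorphic (isomorphic_sym Hiso)).
    exact (substructure_in_K0 l disjoint_union_fuzzy_preorder Hl).
Qed.
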